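(* Let $f:\mathbf{R}\to\mathbf{R}$ be additive. Then $f$ is everywhere surjective if and only if $f$ is surjective and not injective.
   Context: A function $f:\mathbf{R}\to\mathbf{R}$ is additive if $f(x+y)=f(x)+f(y)$ for all $x,y\in\mathbf{R}$. It is everywhere surjective if for every open interval $(a,b)$ with $a<b$ and every $y\in\mathbf{R}$ there exists $x\in(a,b)$ with $f(x)=y$. *)

From Stdlib Require Import Reals.
Open Scope R_scope.

Definition additive (f : R -> R) : Prop :=
  forall x y : R, f (x + y) = f x + f y.

Definition everywhere_surjective (f : R -> R) : Prop :=
  forall a b : R, a < b -> forall y : R, exists x : R, a < x < b /\ f x = y.

Definition surjective (f : R -> R) : Prop := forall y : R, exists x : R, f x = y.

Definition injective (f : R -> R) : Prop := forall x y : R, f x = f y -> x = y.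

(* The kernel of an additive f is a subgroup of R, and f is constant on each
   of its cosets x0 + ker f. If f is not injective, the kernel contains some
   z > 0 and hence every z / n, so it has arbitrarily small positive elements
   and every coset meets every open interval; surjectivity then makes f take
   every value y on (a, b), using the coset of a preimage of y. Conversely an
   everywhere surjective f is surjective and vanishes somewhere in (1, 2). *)

From Stdlib Require Import Reals Lra Classical.
Open Scope R_scope.

Section Additive.

Variable f : R -> R.
Hypothesis f_additive : additive f.

Lemma additive_0 : f 0 = 0.
Proof. pose proof (f_additive 0 0) as E. rewrite Rplus_0_r in E. lra. Qed.

Lemma additive_opp x : f (- x) = - f x.
Proof.
  pose proof (f_additive x (- x)) as E.
  rewrite Rplus_opp_r, additive_0 in E. lra.
Qed.

Lemma additive_sub x y : f (x - y) = f x - f y.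
Proof. unfold Rminus. rewrite f_additive, additive_opp. reflexivity. Qed.

Lemma additive_INR_mult n x : f (INR n * x) = INR n * f x.
Proof.
  induction n as [|n IH].
  - rewrite !Rmult_0_l. exact additive_0.
  - rewrite S_INR, !Rmult_plus_distr_r, !Rmult_1_l, f_additive, IH.
    reflexivity.
Qed.

Lemma additive_IZR_mult k x : f (IZR k * x) = IZR k * f x.
Proof.
  destruct k as [|p|p].
  - rewrite !Rmult_0_l. exact additive_0.
  - rewrite <- Znat.positive_nat_Z, <- INR_IZR_INZ. apply additive_INR_mult.
  - rewrite IZR_NEG, <- Znat.positive_nat_Z, <- INR_IZR_INZ, !Ropp_mult_distr_l_reverse.
    rewrite additive_opp, additive_INR_mult. reflexivity.
Qed.

Lemma not_injective_kernel_pos :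
  ~ injective f -> exists z, 0 < z /\ f z = 0.
Proof.
  intros f_not_inj.
  assert (exists u v, f u = f v /\ u <> v) as (u & v & fuv & uv).
  { apply NNPP. intros no_pair. apply f_not_inj. intros u v fuv.
    apply NNPP. intros uv. apply no_pair. exists u, v. tauto. }
  assert (f_uv : f (u - v) = 0) by (rewrite additive_sub; lra).
  destruct (Rlt_or_le 0 (u - v)) as [pos | nonpos].
  - exists (u - v). split; assumption.
  - exists (- (u - v)). split; [lra |]. rewrite additive_opp, f_uv. lra.
Qed.

Lemma kernel_pos_arbitrarily_small z :
  0 < z -> f z = 0 -> forall eps, 0 < eps -> exists w, 0 < w < eps /\ f w = 0.
Proof.
  intros z_pos fz eps eps_pos.
  destruct (archimed_cor1 (eps / z)) as (n & inv_n_lt & n_pos).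
  { apply Rdiv_lt_0_compat; assumption. }
  assert (INR_n_pos : 0 < INR n) by (apply lt_0_INR; assumption).
  exists (z / INR n). split; [split |].
  - apply Rdiv_lt_0_compat; assumption.
  - apply (Rmult_lt_compat_l z) in inv_n_lt; [| assumption].
    unfold Rdiv in *. replace (z * (eps * / z)) with eps in inv_n_lt
      by (field; lra). exact inv_n_lt.
  - assert (E : f (INR n * (z / INR n)) = INR n * f (z / INR n))
      by apply additive_INR_mult.
    replace (INR n * (z / INR n)) with z in E by (field; lra).
    rewrite fz in E. symmetry in E.
    apply Rmult_integral in E as [E | E]; lra.
Qed.

End Additive.

Lemma IZR_mult_shift_in_interval a b w x0 :
  0 < w -> w < b - a -> exists k : Z, a < x0 + IZR k * w < b.
Proof.
  intros w_pos w_lt.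
  destruct (archimed ((a - x0) / w)) as [up_gt up_le].
  exists (up ((a - x0) / w)).
  assert (lower : (a - x0) / w * w < IZR (up ((a - x0) / w)) * w)
    by (apply Rmult_lt_compat_r; assumption).
  assert (upper : IZR (up ((a - x0) / w)) * w <= ((a - x0) / w + 1) * w)
    by (apply Rmult_le_compat_r; lra).
  replace ((a - x0) / w * w) with (a - x0) in lower by (field; lra).
  replace (((a - x0) / w + 1) * w) with (a - x0 + w) in upper by (field; lra).
  lra.
Qed.

Lemma everywhere_surjective_surjective f :
  everywhere_surjective f -> surjective f.
Proof.
  intros f_es y. destruct (f_es 0 1 Rlt_0_1 y) as (x & _ & fx). exists x. exact fx.
Qed.

Lemma everywhere_surjective_not_injective f :
  additive f -> everywhere_surjective f -> ~ injective f.
Proof.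
  intros f_add f_es f_inj.
  destruct (f_es 1 2 ltac:(lra) 0) as (x & x_in & fx).
  assert (x = 0) by (apply f_inj; rewrite fx, additive_0 by exact f_add; reflexivity).
  lra.
Qed.

Lemma surjective_not_injective_everywhere_surjective f :
  additive f -> surjective f -> ~ injective f -> everywhere_surjective f.
Proof.
  intros f_add f_surj f_not_inj a b ab y.
  destruct (not_injective_kernel_pos f f_add f_not_inj) as (z & z_pos & fz).
  destruct (kernel_pos_arbitrarily_small f f_add z z_pos fz (b - a) ltac:(lra))
    as (w & [w_pos w_lt] & fw).
  destruct (f_surj y) as [x0 fx0].
  destruct (IZR_mult_shift_in_interval a b w x0 w_pos w_lt) as [k k_in].
  exists (x0 + IZR k * w). split; [exact k_in |].
  rewrite f_add, additive_IZR_mult, fw, fx0 by exact f_add. ring.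
Qed.

Theorem mainTheorem9 (f : R -> R) (hf : additive f) :
  everywhere_surjective f <-> (surjective f /\ ~ injective f).
Proof.
  split.
  - intros f_es. split.
    + exact (everywhere_surjective_surjective f f_es).
    + exact (everywhere_surjective_not_injective f hf f_es).
  - intros [f_surj f_not_inj].
    exact (surjective_not_injective_everywhere_surjective f hf f_surj f_not_inj).
Qed.
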